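(* Let $X$ be a Banach space with a Schauder basis, $k\in\mathbb{N}$, $(x_s)_{s\in[\mathbb{N}]^k}$ a $k$-sequence in $X$ and $(\varepsilon_n)_n$ a null sequence of positive reals. Assume that for some infinite $M\subseteq\mathbb{N}$, $(x_s)_{s\in[M]^k}$ is subordinated with respect to the weak topology of $X$, and let $x_0$ be its weak limit (i.e. $x_0=\widehat\varphi(\emptyset)$ for the witnessing map $\widehat\varphi$). Then there exist an infinite $L\subseteq M$ and a family $(\widetilde x_s)_{s\in[L]^k}$ in $X$ such that: (i) $(\widetilde x_s)_{s\in[L]^k}$ admits a canonical tree decomposition $(y_t)_{t\in[L]^{\le k}}$ with $y_\emptyset=x_0$; (ii) for every $s\in[L]^k$, $\|x_s-\widetilde x_s\|<\varepsilon_n$, where $n$ is such that $\min s=L(n)$; (iii) $(\widetilde x_s)_{s\in[L]^k}$ is subordinated with respect to the weak topology of $X$, with weak limit $x_0$.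
   Context: $[M]^k$ (resp. $[M]^{\le k}$) is the set of subsets of $M$ of size $k$ (resp. at most $k$), each identified with its increasing enumeration; $L(n)$ is the $n$-th element of $L$; for $s\in[\mathbb{N}]^k$ and $j\le k$, $s|j=\{s(1),\dots,s(j)\}$ ($s|0=\emptyset$). $[M]^{\le k}$ carries the topology induced by identifying subsets of $\mathbb{N}$ with points of $\{0,1\}^{\mathbb{N}}$ (a compact metric space). A $k$-sequence $(x_s)_{s\in[M]^k}$ is subordinated (w.r.t. the weak topology) if there is a continuous $\widehat\varphi:[M]^{\le k}\to(X,w)$ with $\widehat\varphi(s)=x_s$ for all $s\in[M]^k$; then $(x_s)_{s\in[M]^k}$ converges weakly to $\widehat\varphi(\emptyset)$, meaning that for every weak neighbourhood $U$ of $\widehat\varphi(\emptyset)$ there is $m$ with $x_s\in U$ whenever $s\in[M]^k$, $s(1)\ge M(m)$. A pair $(s_1,s_2)$ in $[L]^k$ is a plegma pair if $s_1(i)<s_2(i)$ for all $i\le k$ and $s_2(i)<s_1(i+1)$ for all $i<k$. Supports are with respect to the Schauder basis; for sets $A<B$ means $\max A<\min B$. A family $(y_t)_{t\in[L]^{\le k}}$ is a canonical tree decomposition of $(x_s)_{s\in[L]^k}$ if: (i) $x_s=\sum_{j=0}^k y_{s|j}$ for every $s\in[L]^k$; (ii) $\mathrm{supp}(y_t)$ is finite for $t\ne\emptyset$; (iii) $\mathrm{supp}(y_{s|j_1})<\mathrm{supp}(y_{s|j_2})$ for all $s\in[L]^k$ and $1\le j_1<j_2\le k$; (iv) $\mathrm{supp}(y_{s_1|j_1})<\mathrm{supp}(y_{s_2|j_2})$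 for every plegma pair $(s_1,s_2)$ in $[L]^k$ and $1\le j_1\le j_2\le k$; (v) $\mathrm{supp}(y_{s_2|j_1})<\mathrm{supp}(y_{s_1|j_2})$ for every plegma pair $(s_1,s_2)$ in $[L]^k$ and $1\le j_1<j_2\le k$. *)

From Stdlib Require Import Reals List.
Import ListNotations.
Open Scope R_scope.

Record Banach := {
  carrier :> Type;
  vadd : carrier -> carrier -> carrier;
  vzero : carrier;
  vopp : carrier -> carrier;
  vscal : R -> carrier -> carrier;
  vnorm : carrier -> R;
  vadd_assoc : forall u v w, vadd u (vadd v w) = vadd (vadd u v) w;
  vadd_comm : forall u v, vadd u v = vadd v u;
  vadd_0l : forall u, vadd vzero u = u;
  vadd_oppr : forall u, vadd u (vopp u) = vzero;
  vscal_1 : forall u, vscal 1 u = u;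
  vscal_assoc : forall a b u, vscal a (vscal b u) = vscal (a * b) u;
  vscal_addr : forall a u v, vscal a (vadd u v) = vadd (vscal a u) (vscal a v);
  vscal_addl : forall a b u, vscal (a + b) u = vadd (vscal a u) (vscal b u);
  vnorm_eq0 : forall u, vnorm u = 0 -> u = vzero;
  vnorm_0 : vnorm vzero = 0;
  vnorm_scal : forall a u, vnorm (vscal a u) = Rabs a * vnorm u;
  vnorm_triangle : forall u v, vnorm (vadd u v) <= vnorm u + vnorm v;
  complete : forall u : nat -> carrier,
    (forall eps, 0 < eps -> exists N, forall m n, (N <= m)%nat -> (N <= n)%nat ->
        vnorm (vadd (u m) (vopp (u n))) < eps) ->
    exists l, forall eps, 0 < eps -> exists N, forall n, (N <= n)%nat ->
        vnorm (vadd (u n) (vopp l)) < eps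
}.

Arguments vadd {_}. Arguments vzero {_}. Arguments vopp {_}.
Arguments vscal {_}. Arguments vnorm {_}.

Definition vsub {X : Banach} (u v : X) : X := vadd u (vopp v).
Definition vsum {X : Banach} (l : list X) : X := fold_right vadd vzero l.

Definition expands {X : Banach} (e : nat -> X) (a : nat -> R) (x : X) : Prop :=
  forall eps, 0 < eps -> exists N, forall n, (N <= n)%nat ->
    vnorm (vsub (vsum (map (fun i => vscal (a i) (e i)) (seq 0 n))) x) < eps.

Definition schauder_basis {X : Banach} (e : nat -> X) : Prop :=
  (forall x : X, exists a, expands e a x) /\
  (forall (x : X) a b, expands e a x -> expands e b x -> forall n, a n = b n).

Definition in_supp {X : Banach} (e : nat -> X) (v : X) (n : nat) : Prop :=
  exists a, expands e a v /\ a n <> 0.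

Definition finite_supp {X : Banach} (e : nat -> X) (v : X) : Prop :=
  exists N, forall n, in_supp e v n -> (n < N)%nat.

(* supp u < supp v : max supp u < min supp v (vacuous if one is empty) *)
Definition supp_lt {X : Banach} (e : nat -> X) (u v : X) : Prop :=
  forall m n, in_supp e u m -> in_supp e v n -> (m < n)%nat.

Definition bounded_linear {X : Banach} (f : X -> R) : Prop :=
  (forall u v : X, f (vadd u v) = f u + f v) /\
  (forall a (u : X), f (vscal a u) = a * f u) /\
  (exists C, forall u : X, Rabs (f u) <= C * vnorm u).

Definition weak_open {X : Banach} (U : X -> Prop) : Prop :=
  forall z, U z -> exists fs : list (X -> R),
    Forall bounded_linear fs /\
    exists delta, 0 < delta /\
      forall w, (forall f, In f fs -> Rabs (f w - f z) < delta) -> U w.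

(* An infinite subset L of N is given by its increasing enumeration:
   L n is the n-th element of L (counting from 0). *)
Definition infinite_enum (L : nat -> nat) : Prop := forall n, (L n < L (S n))%nat.

Definition memb (L : nat -> nat) (a : nat) : Prop := exists m, L m = a.

(* finite subsets of N are identified with their increasing enumeration *)
Definition increasing (s : list nat) : Prop :=
  forall i, (S i < length s)%nat -> (nth i s 0 < nth (S i) s 0)%nat.

Definition in_subsets_eq (L : nat -> nat) (k : nat) (s : list nat) : Prop :=
  length s = k /\ increasing s /\ forall a, In a s -> memb L a.

Definition in_subsets_le (L : nat -> nat) (k : nat) (s : list nat) : Prop :=
  (length s <= k)%nat /\ increasing s /\ forall a, In a s -> memb L a.

Definition restr (s : list nat) (j : nat) : list nat := firstn j s.

(* topology of {0,1}^N: t and t' agree on {0,...,N-1} *)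
Definition agree_below (N : nat) (t t' : list nat) : Prop :=
  forall n, (n < N)%nat -> (In n t <-> In n t').

Definition weak_continuous_on {X : Banach} (M : nat -> nat) (k : nat)
  (phi : list nat -> X) : Prop :=
  forall t, in_subsets_le M k t ->
    forall U : X -> Prop, weak_open U -> U (phi t) ->
      exists N, forall t', in_subsets_le M k t' -> agree_below N t t' -> U (phi t').

Definition subordinating_map {X : Banach} (M : nat -> nat) (k : nat)
  (x : list nat -> X) (phi : list nat -> X) : Prop :=
  weak_continuous_on M k phi /\ forall s, in_subsets_eq M k s -> phi s = x s.

Definition plegma_pair (L : nat -> nat) (k : nat) (s1 s2 : list nat) : Prop :=
  in_subsets_eq L k s1 /\ in_subsets_eq L k s2 /\
  (forall i, (i < k)%nat -> (nth i s1 0 < nth i s2 0)%nat) /\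
  (forall i, (S i < k)%nat -> (nth i s2 0 < nth (S i) s1 0)%nat).

Definition canonical_tree_decomposition {X : Banach} (e : nat -> X)
  (L : nat -> nat) (k : nat) (x : list nat -> X) (y : list nat -> X) : Prop :=
  (forall s, in_subsets_eq L k s ->
     x s = vsum (map (fun j => y (restr s j)) (seq 0 (S k)))) /\
  (forall t, in_subsets_le L k t -> t <> [] -> finite_supp e (y t)) /\
  (forall s j1 j2, in_subsets_eq L k s -> (1 <= j1)%nat -> (j1 < j2)%nat ->
     (j2 <= k)%nat -> supp_lt e (y (restr s j1)) (y (restr s j2))) /\
  (forall s1 s2 j1 j2, plegma_pair L k s1 s2 -> (1 <= j1)%nat -> (j1 <= j2)%nat ->
     (j2 <= k)%nat -> supp_lt e (y (restr s1 j1)) (y (restr s2 j2))) /\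
  (forall s1 s2 j1 j2, plegma_pair L k s1 s2 -> (1 <= j1)%nat -> (j1 < j2)%nat ->
     (j2 <= k)%nat -> supp_lt e (y (restr s2 j1)) (y (restr s1 j2))).

From Pilot Require Import Defs.
From Stdlib Require Import Reals List Lra Lia.
From Stdlib Require Import Classical IndefiniteDescription ClassicalEpsilon.
Import ListNotations.
Open Scope R_scope.

(* The increment of phi
   at t is phi t - phi (t minus its last element) (phi [] at the root), so
   that phi t is the telescoping sum of the increments at the t|j.  We choose
   L = (L i) in M and integers p 0 <= p 1 <= ... such that, for every t in
   [L]^{<=k} ending in L i, the increment at t lives up to tau i on the block
   [p i, p (i+1)) of basis coordinates: its coordinates below p i are small
   (weak continuity of phi, as only finitely many t end before L i) and its
   tail beyond p (i+1) is small (the basis expansion converges, finitely many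
   t again).  Truncating every increment to its block gives y t; the sums of
   y along the restrictions of s define the new sequence, whose supports form
   a canonical tree, which is uniformly close to x (choosing tau i below
   eps n for n <= i), and which stays weakly continuous because the
   truncation errors tend to 0 in norm (tau i <= 1 / (i + 1)). *)

Arguments vadd_assoc {_}. Arguments vadd_comm {_}. Arguments vadd_0l {_}.
Arguments vadd_oppr {_}. Arguments vscal_1 {_}. Arguments vscal_assoc {_}.
Arguments vscal_addr {_}. Arguments vscal_addl {_}. Arguments vnorm_eq0 {_}.
Arguments vnorm_0 {_}. Arguments vnorm_scal {_}. Arguments vnorm_triangle {_}.
Arguments complete {_}.

(** * Algebra in a Banach space *)

Section VectorAlgebra.
Context {X : Banach}.
Implicit Types u v w : X.

Lemma vadd_0r u : vadd u vzero = u.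
Proof. rewrite vadd_comm; apply vadd_0l. Qed.

Lemma vadd_oppl u : vadd (vopp u) u = vzero.
Proof. rewrite vadd_comm; apply vadd_oppr. Qed.

Lemma vadd_cancel_l u v w : vadd u v = vadd u w -> v = w.
Proof.
  intro H. rewrite <- (vadd_0l v), <- (vadd_0l w), <- (vadd_oppl u).
  rewrite <- !vadd_assoc, H. reflexivity.
Qed.

Lemma vopp_unique u v : vadd u v = vzero -> v = vopp u.
Proof. intro H. apply (vadd_cancel_l u). rewrite H, vadd_oppr. reflexivity. Qed.

Lemma vopp_opp u : vopp (vopp u) = u.
Proof. symmetry. apply vopp_unique, vadd_oppl. Qed.

Lemma vopp_zero : vopp (@vzero X) = vzero.
Proof. symmetry. apply vopp_unique, vadd_0l. Qed.

Lemma vadd_ca u v w : vadd u (vadd v w) = vadd v (vadd u w).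
Proof. rewrite !vadd_assoc, (vadd_comm u v). reflexivity. Qed.

Lemma vadd_acbd (a b c d : X) : vadd (vadd a b) (vadd c d) = vadd (vadd a c) (vadd b d).
Proof. rewrite <- !vadd_assoc. f_equal. apply vadd_ca. Qed.

Lemma vopp_add u v : vopp (vadd u v) = vadd (vopp u) (vopp v).
Proof.
  symmetry. apply vopp_unique. rewrite vadd_acbd, !vadd_oppr, vadd_0l. reflexivity.
Qed.

Lemma vscal_0 u : vscal 0 u = vzero.
Proof.
  apply (vadd_cancel_l (vscal 0 u)). rewrite vadd_0r, <- vscal_addl. f_equal. ring.
Qed.

Lemma vscal_zero (a : R) : vscal a (@vzero X) = vzero.
Proof. rewrite <- (vscal_0 vzero), vscal_assoc. f_equal. ring. Qed.

Lemma vscal_opp (a : R) u : vscal (- a) u = vopp (vscal a u).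
Proof.
  apply vopp_unique. rewrite <- vscal_addl. replace (a + - a) with 0 by ring.
  apply vscal_0.
Qed.

Lemma vopp_scal u : vopp u = vscal (- (1)) u.
Proof. rewrite vscal_opp, vscal_1. reflexivity. Qed.

Lemma vscal_sub (a : R) u v : vscal a (vsub u v) = vsub (vscal a u) (vscal a v).
Proof.
  unfold vsub. rewrite vscal_addr, !vopp_scal, !vscal_assoc, Rmult_comm. reflexivity.
Qed.

Lemma vscal_subl (a b : R) u : vsub (vscal a u) (vscal b u) = vscal (a - b) u.
Proof. unfold vsub. rewrite <- vscal_opp, <- vscal_addl. reflexivity. Qed.

Lemma vsub_add_distr (a b c d : X) :
  vsub (vadd a b) (vadd c d) = vadd (vsub a c) (vsub b d).
Proof. unfold vsub. rewrite vopp_add, vadd_acbd. reflexivity. Qed.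

Lemma vsub_diag u : vsub u u = vzero.
Proof. apply vadd_oppr. Qed.

Lemma vsub_0r u : vsub u vzero = u.
Proof. unfold vsub. rewrite vopp_zero. apply vadd_0r. Qed.

Lemma vsub_opp u v : vopp (vsub u v) = vsub v u.
Proof. unfold vsub. rewrite vopp_add, vopp_opp, vadd_comm. reflexivity. Qed.

Lemma vsub_trans u v w : vsub u w = vadd (vsub u v) (vsub v w).
Proof.
  unfold vsub. rewrite <- vadd_assoc, (vadd_assoc (vopp v)), vadd_oppl, vadd_0l.
  reflexivity.
Qed.

Lemma vsub_add_r u v : vsub (vadd u v) u = v.
Proof.
  unfold vsub. rewrite (vadd_comm u v), <- vadd_assoc, vadd_oppr, vadd_0r. reflexivity.
Qed.

Lemma vadd_sub u v : vadd v (vsub u v) = u.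
Proof. unfold vsub. rewrite vadd_ca, vadd_oppr, vadd_0r. reflexivity. Qed.

Lemma vsub_sub_self u v : vsub u (vsub u v) = v.
Proof.
  unfold vsub. rewrite vopp_add, vopp_opp, vadd_assoc, vadd_oppr, vadd_0l. reflexivity.
Qed.

Lemma vsub_sub_sub u v w : vsub (vsub u v) (vsub u w) = vsub w v.
Proof.
  unfold vsub. rewrite vopp_add, vopp_opp, vadd_acbd, vadd_oppr, vadd_0l, vadd_comm.
  reflexivity.
Qed.

Lemma vnorm_opp u : vnorm (vopp u) = vnorm u.
Proof. rewrite vopp_scal, vnorm_scal, Rabs_Ropp, Rabs_R1. ring. Qed.

Lemma vnorm_ge0 u : 0 <= vnorm u.
Proof.
  pose proof (vnorm_triangle u (vopp u)) as H.
  rewrite vadd_oppr, vnorm_0, vnorm_opp in H. lra.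
Qed.

Lemma vnorm_sub_sym u v : vnorm (vsub u v) = vnorm (vsub v u).
Proof. rewrite <- vsub_opp, vnorm_opp. reflexivity. Qed.

Lemma vnorm_sub_tri u v w : vnorm (vsub u w) <= vnorm (vsub u v) + vnorm (vsub v w).
Proof. rewrite (vsub_trans u v w). apply vnorm_triangle. Qed.

Lemma vnorm_sub_le u v : vnorm (vsub u v) <= vnorm u + vnorm v.
Proof. unfold vsub. rewrite <- (vnorm_opp v). apply vnorm_triangle. Qed.

Lemma vnorm_small_eq0 u : (forall d, 0 < d -> vnorm u <= d) -> u = vzero.
Proof.
  intro H. apply vnorm_eq0. pose proof (vnorm_ge0 u).
  destruct (Rle_lt_dec (vnorm u) 0); [lra|].
  specialize (H (vnorm u / 2) ltac:(lra)). lra.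
Qed.

Lemma vsum_app (l1 l2 : list X) : vsum (l1 ++ l2) = vadd (vsum l1) (vsum l2).
Proof.
  induction l1; simpl. now rewrite vadd_0l. rewrite IHl1. apply vadd_assoc.
Qed.

Lemma vsum_map_ext {A : Type} (f g : A -> X) (l : list A) :
  (forall i, In i l -> f i = g i) -> vsum (map f l) = vsum (map g l).
Proof. intro H. f_equal. apply map_ext_in. exact H. Qed.

Lemma vsum_map_add {A : Type} (f g : A -> X) (l : list A) :
  vsum (map (fun i => vadd (f i) (g i)) l) = vadd (vsum (map f l)) (vsum (map g l)).
Proof. induction l; simpl. now rewrite vadd_0l. rewrite IHl. apply vadd_acbd. Qed.

Lemma vsum_map_sub {A : Type} (f g : A -> X) (l : list A) :
  vsum (map (fun i => vsub (f i) (g i)) l) = vsub (vsum (map f l)) (vsum (map g l)).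
Proof.
  induction l; simpl. now rewrite vsub_0r. rewrite IHl. symmetry. apply vsub_add_distr.
Qed.

Lemma vsum_map_scal {A : Type} (a : R) (f : A -> X) (l : list A) :
  vsum (map (fun i => vscal a (f i)) l) = vscal a (vsum (map f l)).
Proof.
  induction l; simpl. now rewrite vscal_zero. rewrite IHl. symmetry. apply vscal_addr.
Qed.

Lemma vsum_seq_S (f : nat -> X) (a n : nat) :
  vsum (map f (seq a (S n))) = vadd (vsum (map f (seq a n))) (f (a + n)%nat).
Proof. rewrite seq_S, map_app, vsum_app. simpl. now rewrite vadd_0r. Qed.

Lemma vsum_norm_bound {A : Type} (f : A -> X) (l : list A) (c : R) :
  (forall i, In i l -> vnorm (f i) <= c) -> vnorm (vsum (map f l)) <= INR (length l) * c.
Proof.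
  induction l as [|a l IH]; intro H.
  - simpl. rewrite vnorm_0. lra.
  - change (vsum (map f (a :: l))) with (vadd (f a) (vsum (map f l))).
    cbn [length]. rewrite S_INR. eapply Rle_trans. apply vnorm_triangle.
    pose proof (H a (or_introl eq_refl)). pose proof (IH (fun i Hi => H i (or_intror Hi))).
    lra.
Qed.

End VectorAlgebra.

(** * Coordinate functionals and partial-sum projections of a Schauder basis *)

Definition ps {X : Banach} (e : nat -> X) (a : nat -> R) (n : nat) : X :=
  vsum (map (fun i => vscal (a i) (e i)) (seq 0 n)).

Section Expansions.
Context {X : Banach} {e : nat -> X}.

Lemma ps_add a b n : ps e (fun i => a i + b i) n = vadd (ps e a n) (ps e b n).
Proof.
  unfold ps. rewrite <- vsum_map_add. apply vsum_map_ext. intros. apply vscal_addl.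
Qed.

Lemma ps_scal c a n : ps e (fun i => c * a i) n = vscal c (ps e a n).
Proof.
  unfold ps. rewrite <- vsum_map_scal. apply vsum_map_ext. intros. symmetry; apply vscal_assoc.
Qed.

Lemma ps_S a n : ps e a (S n) = vadd (ps e a n) (vscal (a n) (e n)).
Proof. unfold ps. rewrite vsum_seq_S. reflexivity. Qed.

Lemma ps_ext a b n : (forall i, (i < n)%nat -> a i = b i) -> ps e a n = ps e b n.
Proof.
  intro H. unfold ps. apply vsum_map_ext. intros i Hi. apply in_seq in Hi. rewrite H; auto; lia.
Qed.

Lemma expands_add a b (u v : X) :
  expands e a u -> expands e b v -> expands e (fun i => a i + b i) (vadd u v).
Proof.
  intros Ha Hb eps Heps.
  destruct (Ha (eps/2)) as [N1 H1]; [lra|]. destruct (Hb (eps/2)) as [N2 H2]; [lra|].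
  exists (max N1 N2). intros n Hn. fold (ps e (fun i => a i + b i) n).
  rewrite ps_add, vsub_add_distr. eapply Rle_lt_trans. apply vnorm_triangle.
  specialize (H1 n ltac:(lia)). specialize (H2 n ltac:(lia)).
  fold (ps e a n) in H1. fold (ps e b n) in H2. lra.
Qed.

Lemma expands_scal c a (u : X) : expands e a u -> expands e (fun i => c * a i) (vscal c u).
Proof.
  intros Ha eps Heps.
  assert (Hc : 0 < Rabs c + 1) by (pose proof (Rabs_pos c); lra).
  destruct (Ha (eps / (Rabs c + 1))) as [N H1]; [apply Rdiv_lt_0_compat; lra|].
  exists N. intros n Hn. fold (ps e (fun i => c * a i) n).
  rewrite ps_scal, <- vscal_sub, vnorm_scal. specialize (H1 n Hn). fold (ps e a n) in H1.
  pose proof (Rabs_pos c). pose proof (vnorm_ge0 (vsub (ps e a n) u)).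
  apply Rle_lt_trans with ((Rabs c + 1) * vnorm (vsub (ps e a n) u)); [nra|].
  apply Rmult_lt_compat_l with (r := Rabs c + 1) in H1; [|lra].
  replace ((Rabs c + 1) * (eps / (Rabs c + 1))) with eps in H1 by (field; lra). lra.
Qed.

Lemma ps_stable a m n : (forall i, (m <= i)%nat -> a i = 0) -> (m <= n)%nat -> ps e a n = ps e a m.
Proof.
  intros Ha Hn. induction Hn; auto. rewrite ps_S, Ha, vscal_0, vadd_0r by lia. exact IHHn.
Qed.

Lemma expands_ps a m : (forall i, (m <= i)%nat -> a i = 0) -> expands e a (ps e a m).
Proof.
  intros Ha eps Heps. exists m. intros n Hn. fold (ps e a n).
  rewrite (ps_stable a m n Ha Hn), vsub_diag, vnorm_0. exact Heps.
Qed.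

End Expansions.

Section CoordinateFunctionals.
Context {X : Banach} {e : nat -> X} (He : schauder_basis e).

Definition coef (j : nat) (x : X) : R :=
  proj1_sig (constructive_indefinite_description _ (proj1 He x)) j.

(* e*_j is well defined and linear, by uniqueness of expansions. *)
Lemma coef_spec (x : X) : expands e (fun j => coef j x) x.
Proof.
  unfold coef. destruct (constructive_indefinite_description _ (proj1 He x)). exact e0.
Qed.

Lemma coef_unique a (x : X) : expands e a x -> forall j, coef j x = a j.
Proof. intros H j. apply (proj2 He x). apply coef_spec. exact H. Qed.

Lemma coef_add j (u v : X) : coef j (vadd u v) = coef j u + coef j v.
Proof.
  apply (coef_unique (fun i => coef i u + coef i v)). apply expands_add; apply coef_spec.
Qed.

Lemma coef_scal j c (u : X) : coef j (vscal c u) = c * coef j u.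
Proof.
  apply (coef_unique (fun i => c * coef i u)). apply expands_scal, coef_spec.
Qed.

Lemma coef_sub j (u v : X) : coef j (vsub u v) = coef j u - coef j v.
Proof. unfold vsub. rewrite coef_add, vopp_scal, coef_scal. ring. Qed.

Definition P (n : nat) (x : X) : X := ps e (fun i => coef i x) n.

Lemma P_add n (u v : X) : P n (vadd u v) = vadd (P n u) (P n v).
Proof. unfold P. rewrite <- ps_add. apply ps_ext. intros. apply coef_add. Qed.

Lemma P_scal n c (u : X) : P n (vscal c u) = vscal c (P n u).
Proof. unfold P. rewrite <- ps_scal. apply ps_ext. intros. apply coef_scal. Qed.

Lemma P_sub n (u v : X) : P n (vsub u v) = vsub (P n u) (P n v).
Proof. unfold vsub. rewrite P_add, vopp_scal, P_scal, <- vopp_scal. reflexivity. Qed.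

Lemma P_zero n : P n (@vzero X) = vzero.
Proof.
  transitivity (P n (vscal 0 vzero)); [f_equal; symmetry; apply vscal_0|].
  rewrite P_scal. apply vscal_0.
Qed.

Lemma P_S n (u : X) : P (S n) u = vadd (P n u) (vscal (coef n u) (e n)).
Proof. apply ps_S. Qed.

Lemma P_cv (u : X) eps : 0 < eps -> exists N, forall n, (N <= n)%nat -> vnorm (vsub (P n u) u) < eps.
Proof. apply (coef_spec u). Qed.

(* Basis vectors are nonzero: otherwise 0 would have two expansions. *)
Lemma e_nonzero j : 0 < vnorm (e j).
Proof.
  destruct (Rle_lt_dec (vnorm (e j)) 0) as [H|H]; [|exact H]. exfalso.
  assert (Hz : e j = vzero) by (apply vnorm_eq0; pose proof (vnorm_ge0 (e j)); lra).
  set (delta := fun i => if Nat.eq_dec i j then 1 else 0).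
  assert (Hps : ps e delta (S j) = vzero).
  { apply vnorm_small_eq0. intros d Hd.
    rewrite ps_S. replace (ps e delta j) with (ps e (fun i => 0 * 0) j).
    - rewrite ps_scal, Hz, vscal_zero, !vscal_0, vadd_0r, vnorm_0. lra.
    - apply ps_ext. intros i Hi. unfold delta. destruct (Nat.eq_dec i j); [lia|ring]. }
  assert (H1 : expands e (fun i => 0 * 0) vzero).
  { rewrite <- (vscal_0 (ps e (fun _ => 0) 0)), <- ps_scal.
    apply expands_ps. intros. ring. }
  assert (H2 : expands e delta vzero).
  { rewrite <- Hps. apply expands_ps. intros i Hi. unfold delta.
    destruct (Nat.eq_dec i j); [lia|reflexivity]. }
  pose proof (proj2 He _ _ _ H1 H2 j) as E. unfold delta in E.
  destruct (Nat.eq_dec j j); [lra|congruence].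
Qed.

Lemma coef_P_bound j (u : X) : Rabs (coef j u) * vnorm (e j) = vnorm (vsub (P (S j) u) (P j u)).
Proof. rewrite P_S, vsub_add_r, vnorm_scal. reflexivity. Qed.

Lemma Pdiff_supp (z : X) m0 m1 :
  (m0 <= m1)%nat -> forall n, in_supp e (vsub (P m1 z) (P m0 z)) n -> (m0 <= n < m1)%nat.
Proof.
  intros Hm n [a [Ha Han]].
  set (cut := fun m j => if Nat.ltb j m then coef j z else 0).
  assert (Hcut : forall m, P m z = ps e (cut m) m).
  { intro m. apply ps_ext. intros i Hi. unfold cut. destruct (Nat.ltb_spec i m); lia || auto. }
  set (a' := fun j => cut m1 j + (- (1)) * cut m0 j).
  assert (Ha' : expands e a' (vsub (P m1 z) (P m0 z))).
  { assert (E : vsub (P m1 z) (P m0 z) = ps e a' m1).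
    { unfold a'. rewrite ps_add, ps_scal, <- vopp_scal, !Hcut.
      rewrite (ps_stable (cut m0) m0 m1); auto.
      intros i Hi. unfold cut. destruct (Nat.ltb_spec i m0); [lia|reflexivity]. }
    rewrite E. apply expands_ps. intros i Hi. unfold a', cut.
    destruct (Nat.ltb_spec i m1), (Nat.ltb_spec i m0); try lia. ring. }
  pose proof (proj2 He _ _ _ Ha Ha' n) as E. unfold a', cut in E.
  destruct (Nat.ltb_spec n m1), (Nat.ltb_spec n m0); try lia; exfalso; apply Han; rewrite E; ring.
Qed.

End CoordinateFunctionals.

(** * The basis constant is finite *)

Lemma seq_choice {A : Type} (Rel : nat -> A -> A -> Prop) (a0 : A) :
  (forall i a, exists a', Rel i a a') ->
  exists f : nat -> A, f 0%nat = a0 /\ forall i, Rel i (f i) (f (S i)).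
Proof.
  intro H.
  destruct (functional_choice (fun (ia : nat * A) a' => Rel (fst ia) (snd ia) a')) as [g Hg].
  { intros [i a]. apply H. }
  exists (fix f i := match i with O => a0 | S i => g (i, f i) end).
  split; [reflexivity|]. intro i. apply (Hg (i, _)).
Qed.

Lemma half_pow_pos n : 0 < (/2)^n.
Proof. apply pow_lt. lra. Qed.

Lemma half_pow_S n : (/2)^(S n) = (/2)^n / 2.
Proof. simpl. field. Qed.

Lemma half_pow_small eps : 0 < eps -> exists N, (/2)^N < eps.
Proof.
  intro H. destruct (pow_lt_1_zero (/2) ltac:(rewrite Rabs_pos_eq; lra) eps H) as [N HN].
  exists N. specialize (HN N (le_n N)). rewrite Rabs_pos_eq in HN; auto.
  left; apply half_pow_pos.
Qed.

Lemma half_pow_le n m : (n <= m)%nat -> (/2)^m <= (/2)^n.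
Proof. induction 1. lra. rewrite half_pow_S. pose proof (half_pow_pos m). lra. Qed.

Lemma half_pow_cv (c : R) : Un_cv (fun i => c * (/2)^i) 0.
Proof.
  intros eps Heps. destruct (half_pow_small (eps / (Rabs c + 1))) as [N HN].
  { apply Rdiv_lt_0_compat; [lra|]. pose proof (Rabs_pos c). lra. }
  exists N. intros n Hn. unfold R_dist. rewrite Rminus_0_r, Rabs_mult.
  rewrite (Rabs_pos_eq ((/2)^n)) by (left; apply half_pow_pos).
  pose proof (half_pow_le N n Hn). pose proof (half_pow_pos n). pose proof (Rabs_pos c).
  apply Rmult_lt_compat_l with (r := Rabs c + 1) in HN; [|lra].
  replace ((Rabs c + 1) * (eps / (Rabs c + 1))) with eps in HN by (field; lra). nra.
Qed.

Section Baire.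
Context {X : Banach}.

Lemma nested_balls (c : nat -> X) (r : nat -> R) :
  (forall i, 0 < r i <= (/2)^i) ->
  (forall i j, (i <= j)%nat -> vnorm (vsub (c j) (c i)) <= r i) ->
  exists z, forall i, vnorm (vsub z (c i)) <= r i.
Proof.
  intros Hr Hc.
  destruct (complete c) as [z Hz].
  { intros eps Heps. destruct (half_pow_small (eps/2) ltac:(lra)) as [N HN]. exists N.
    intros m n Hm Hn. pose proof (Hc N m Hm). pose proof (Hc N n Hn).
    pose proof (vnorm_sub_tri (c m) (c N) (c n)). rewrite (vnorm_sub_sym (c N)) in *.
    pose proof (Hr N). fold (vsub (c m) (c n)). lra. }
  exists z. intro i. apply Rnot_lt_le. intro Hlt.
  destruct (Hz (vnorm (vsub z (c i)) - r i) ltac:(lra)) as [N HN].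
  specialize (HN (max N i) ltac:(lia)). fold (vsub (c (max N i)) z) in HN.
  pose proof (Hc i (max N i) ltac:(lia)).
  pose proof (vnorm_sub_tri z (c (max N i)) (c i)). rewrite vnorm_sub_sym in HN. lra.
Qed.

Lemma Baire_step (C : X -> Prop) :
  (forall x, ~ C x -> exists d, 0 < d /\ forall y, vnorm (vsub y x) < d -> ~ C y) ->
  (forall x0 r, 0 < r -> exists y, vnorm (vsub y x0) < r /\ ~ C y) ->
  forall x0 r, 0 < r -> exists x1 r1, 0 < r1 /\ r1 <= r / 2 /\
    forall y, vnorm (vsub y x1) <= r1 -> vnorm (vsub y x0) < r /\ ~ C y.
Proof.
  intros Hcl Hint x0 r Hr.
  destruct (Hint x0 r Hr) as [y [Hy1 Hy2]]. destruct (Hcl y Hy2) as [d [Hd Hd2]].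
  pose proof (Rmin_l (d/2) (Rmin ((r - vnorm (vsub y x0))/2) (r/2))).
  pose proof (Rmin_r (d/2) (Rmin ((r - vnorm (vsub y x0))/2) (r/2))).
  pose proof (Rmin_l ((r - vnorm (vsub y x0))/2) (r/2)).
  pose proof (Rmin_r ((r - vnorm (vsub y x0))/2) (r/2)).
  assert (Hr1 : 0 < Rmin (d/2) (Rmin ((r - vnorm (vsub y x0))/2) (r/2)))
    by (repeat apply Rmin_glb_lt; lra).
  set (r1 := Rmin (d/2) (Rmin ((r - vnorm (vsub y x0))/2) (r/2))) in *.
  exists y, r1. split; [exact Hr1|split]; [lra|].
  - intros z Hz. split.
    + pose proof (vnorm_sub_tri z y x0). lra.
    + apply Hd2. lra.
Qed.

Lemma Baire (C : nat -> X -> Prop) :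
  (forall m x, ~ C m x -> exists d, 0 < d /\ forall y, vnorm (vsub y x) < d -> ~ C m y) ->
  (forall x, exists m, C m x) ->
  exists m x0 r, 0 < r /\ forall y, vnorm (vsub y x0) < r -> C m y.
Proof.
  intros Hcl Hcov. apply NNPP. intro Hneg.
  assert (Hint : forall m x0 r, 0 < r -> exists y, vnorm (vsub y x0) < r /\ ~ C m y).
  { intros m x0 r Hr. apply NNPP. intro H1. apply Hneg. exists m, x0, r. split; auto.
    intros y Hy. apply NNPP. intro H2. apply H1. exists y. auto. }
  destruct (seq_choice (fun i (p q : X * R) => 0 < snd p ->
      0 < snd q /\ snd q <= snd p / 2 /\
      forall y, vnorm (vsub y (fst q)) <= snd q -> vnorm (vsub y (fst p)) < snd p /\ ~ C i y)
      (vzero, 1)) as [f [Hf0 Hf]].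
  { intros i [x0 r]. destruct (Rlt_le_dec 0 r) as [Hr|Hr].
    - destruct (Baire_step (C i) (Hcl i) (Hint i) x0 r Hr) as [x1 [r1 H]].
      exists (x1, r1). intros _. exact H.
    - exists (x0, r). simpl. lra. }
  assert (Hpos : forall i, 0 < snd (f i) <= (/2)^i).
  { induction i; [rewrite Hf0; simpl; lra|].
    destruct (Hf i (proj1 IHi)) as [H1 [H2 _]]. rewrite half_pow_S. lra. }
  assert (Hnest : forall i j, (i <= j)%nat -> forall y,
      vnorm (vsub y (fst (f j))) <= snd (f j) -> vnorm (vsub y (fst (f i))) <= snd (f i)).
  { intros i j Hij. induction Hij; auto. intros y Hy. apply IHHij.
    left. apply (Hf m (proj1 (Hpos m))). exact Hy. }
  destruct (nested_balls (fun i => fst (f i)) (fun i => snd (f i)) Hpos) as [z Hz].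
  { intros i j Hij. apply (Hnest i j Hij). rewrite vsub_diag, vnorm_0. left; apply Hpos. }
  destruct (Hcov z) as [m Hm].
  apply (Hf m (proj1 (Hpos m))) with z; auto.
Qed.

End Baire.

Section BasisConstant.
Context {X : Banach} {e : nat -> X} (He : schauder_basis e).

Definition proj_bounded (c : R) (x : X) : Prop := forall n, vnorm (P He n x) <= c.

Definition proj_bounded_closure (c : R) (x : X) : Prop :=
  forall d, 0 < d -> exists a, proj_bounded c a /\ vnorm (vsub x a) < d.

Lemma proj_bounded_sub c1 c2 u v :
  proj_bounded c1 u -> proj_bounded c2 v -> proj_bounded (c1 + c2) (vsub u v).
Proof.
  intros Hu Hv n. rewrite P_sub. eapply Rle_trans. apply vnorm_sub_le.
  pose proof (Hu n). pose proof (Hv n). lra.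
Qed.

Lemma proj_bounded_scal c lam u :
  0 <= lam -> proj_bounded c u -> proj_bounded (lam * c) (vscal lam u).
Proof.
  intros Hl Hu n. rewrite P_scal, vnorm_scal, Rabs_pos_eq by lra.
  apply Rmult_le_compat_l; auto.
Qed.

(* Each single vector has bounded projections, since P n x -> x. *)
Lemma proj_bounded_finite (x : X) : exists m : nat, proj_bounded (INR m) x.
Proof.
  destruct (P_cv He x 1 ltac:(lra)) as [N HN].
  assert (Hf : forall N, exists c, forall n, (n < N)%nat -> vnorm (P He n x) <= c).
  { induction N0 as [|N0 [c Hc]]; [exists 0; intros; lia|].
    exists (Rmax c (vnorm (P He N0 x))). intros n Hn.
    destruct (Nat.eq_dec n N0) as [->|]; [apply Rmax_r|].
    eapply Rle_trans; [apply Hc; lia|apply Rmax_l]. }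
  destruct (Hf N) as [c Hc].
  destruct (INR_unbounded (Rmax c (vnorm x + 1))) as [m Hm]. exists m. intro n.
  pose proof (Rmax_l c (vnorm x + 1)). pose proof (Rmax_r c (vnorm x + 1)).
  destruct (Nat.lt_ge_cases n N) as [Hn|Hn].
  - specialize (Hc n Hn). lra.
  - specialize (HN n Hn). pose proof (vnorm_sub_tri (P He n x) x vzero).
    rewrite !vsub_0r in H1. lra.
Qed.

Lemma proj_bounded_closure_scal c lam v :
  0 < lam -> proj_bounded_closure c v -> proj_bounded_closure (lam * c) (vscal lam v).
Proof.
  intros Hl Hv d Hd. destruct (Hv (d / lam)) as [a [Ha1 Ha2]]; [apply Rdiv_lt_0_compat; lra|].
  exists (vscal lam a). split; [apply proj_bounded_scal; [lra|exact Ha1]|].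
  rewrite <- vscal_sub, vnorm_scal, Rabs_pos_eq by lra.
  apply Rmult_lt_compat_l with (r := lam) in Ha2; auto.
  replace (lam * (d / lam)) with d in Ha2 by (field; lra). exact Ha2.
Qed.

(* Baire: on some ball around 0, every vector is approximable by vectors
   with uniformly bounded projections. *)
Lemma ball_approx : exists c r, 0 <= c /\ 0 < r /\
  forall v, vnorm v < r -> proj_bounded_closure c v.
Proof.
  destruct (Baire (fun m => proj_bounded_closure (INR m))) as [m [x0 [r [Hr Hball]]]].
  - intros m x Hx. apply not_all_ex_not in Hx. destruct Hx as [d Hd].
    apply imply_to_and in Hd. destruct Hd as [Hd Hd2].
    exists (d/2). split; [lra|]. intros y Hy Hcl. apply Hd2.
    destruct (Hcl (d/2) ltac:(lra)) as [a [Ha1 Ha2]]. exists a. split; auto.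
    pose proof (vnorm_sub_tri x y a). rewrite vnorm_sub_sym in Hy. lra.
  - intro x. destruct (proj_bounded_finite x) as [m Hm]. exists m. intros d Hd. exists x.
    split; auto. rewrite vsub_diag, vnorm_0. auto.
  - exists (INR m + INR m), r. split; [pose proof (pos_INR m); lra|]. split; auto.
    intros v Hv d Hd.
    assert (Hy1 : vnorm (vsub (vadd x0 v) x0) < r) by (rewrite vsub_add_r; exact Hv).
    assert (Hy2 : vnorm (vsub x0 x0) < r) by (rewrite vsub_diag, vnorm_0; exact Hr).
    destruct (Hball _ Hy1 (d/2) ltac:(lra)) as [a [Ha1 Ha2]].
    destruct (Hball _ Hy2 (d/2) ltac:(lra)) as [b [Hb1 Hb2]].
    exists (vsub a b). split; [apply proj_bounded_sub; auto|].
    replace (vsub v (vsub a b)) with (vsub (vsub (vadd x0 v) a) (vsub x0 b)).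
    + eapply Rle_lt_trans. apply vnorm_sub_le. lra.
    + unfold vsub. rewrite !vopp_add, !vopp_opp.
      rewrite <- (vadd_assoc x0 v (vopp a)), vadd_acbd, vadd_oppr, vadd_0l, vadd_assoc.
      reflexivity.
Qed.

Lemma P_diff_bound j (u v : X) b :
  (forall n, vnorm (vsub (P He n u) (P He n v)) <= b) ->
  Rabs (coef He j u - coef He j v) <= 2 * b / vnorm (e j).
Proof.
  intro H. pose proof (e_nonzero He j) as He0.
  rewrite <- coef_sub. apply Rmult_le_reg_r with (vnorm (e j)); auto.
  rewrite coef_P_bound. replace (2 * b / vnorm (e j) * vnorm (e j)) with (b + b) by (field; lra).
  rewrite !P_sub. eapply Rle_trans. apply vnorm_sub_le.
  pose proof (H (S j)); pose proof (H j). lra.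
Qed.

Lemma P_cv_coef (w : nat -> X) (a : nat -> R) :
  (forall j, Un_cv (fun i => coef He j (w i)) (a j)) ->
  forall n eps, 0 < eps -> exists I, forall i, (I <= i)%nat -> vnorm (vsub (P He n (w i)) (ps e a n)) < eps.
Proof.
  intros Ha. induction n; intros eps Heps.
  - exists 0%nat. intros. unfold P, ps. simpl. rewrite vsub_diag, vnorm_0. lra.
  - destruct (IHn (eps/2) ltac:(lra)) as [I1 HI1]. pose proof (e_nonzero He n).
    destruct (Ha n (eps / 2 / vnorm (e n))) as [I2 HI2]; [apply Rdiv_lt_0_compat; lra|].
    exists (max I1 I2). intros i Hi. rewrite P_S, ps_S, vsub_add_distr.
    eapply Rle_lt_trans. apply vnorm_triangle.
    specialize (HI1 i ltac:(lia)). specialize (HI2 i ltac:(lia)). unfold R_dist in HI2.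
    rewrite vscal_subl, vnorm_scal.
    apply Rmult_lt_compat_r with (r := vnorm (e n)) in HI2; auto.
    replace (eps / 2 / vnorm (e n) * vnorm (e n)) with (eps/2) in HI2 by (field; lra). lra.
Qed.

Lemma coef_limits (w : nat -> X) (beta : nat -> R) :
  Un_cv beta 0 ->
  (forall i j n, (i <= j)%nat -> vnorm (vsub (P He n (w j)) (P He n (w i))) <= beta i) ->
  exists a, forall j, Un_cv (fun i => coef He j (w i)) (a j).
Proof.
  intros Hbcv Hw.
  assert (Hcau : forall j, Cauchy_crit (fun i => coef He j (w i))).
  { intros j eps Heps. pose proof (e_nonzero He j).
    destruct (Hbcv (eps * vnorm (e j) / 3)) as [I HI]; [apply Rdiv_lt_0_compat; nra|].
    assert (Hpq : forall p q, (I <= p)%nat -> (p <= q)%nat ->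
               Rabs (coef He j (w q) - coef He j (w p)) < eps).
    { intros p q Hp Hq. eapply Rle_lt_trans. apply (P_diff_bound j _ _ (beta p)).
      { intro n. apply Hw; auto. }
      specialize (HI p Hp). unfold R_dist in HI. rewrite Rminus_0_r in HI.
      apply Rmult_lt_reg_r with (vnorm (e j)); auto.
      replace (2 * beta p / vnorm (e j) * vnorm (e j)) with (2 * beta p) by (field; lra).
      pose proof (Rle_abs (beta p)). pose proof (Rmult_lt_0_compat _ _ Heps H). lra. }
    exists I. intros p q Hp Hq. unfold R_dist.
    destruct (Nat.le_ge_cases p q).
    - rewrite Rabs_minus_sym. apply Hpq; auto.
    - apply Hpq; auto. }
  exists (fun j => proj1_sig (R_complete _ (Hcau j))).
  intro j. destruct (R_complete _ (Hcau j)). auto.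
Qed.

(* If w i -> x in norm and the projections of the w i are uniformly Cauchy
   with rate beta, then the projections of x are within beta i of those
   of w i: the coordinatewise limits a of the w i are the coordinates of x. *)
Lemma P_limit (w : nat -> X) (x : X) (beta : nat -> R) :
  Un_cv beta 0 ->
  (forall i j n, (i <= j)%nat -> vnorm (vsub (P He n (w j)) (P He n (w i))) <= beta i) ->
  (forall eps, 0 < eps -> exists N, forall i, (N <= i)%nat -> vnorm (vsub (w i) x) < eps) ->
  forall i n, vnorm (vsub (P He n x) (P He n (w i))) <= beta i.
Proof.
  intros Hbcv Hw Hwx. destruct (coef_limits w beta Hbcv Hw) as [a Ha].
  assert (Hlim : forall n i, vnorm (vsub (ps e a n) (P He n (w i))) <= beta i).
  { intros n i. apply Rnot_lt_le. intro Hlt.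
    destruct (P_cv_coef w a Ha n (vnorm (vsub (ps e a n) (P He n (w i))) - beta i))
      as [I HI]; [lra|].
    specialize (HI (max I i) ltac:(lia)). specialize (Hw i (max I i) n ltac:(lia)).
    pose proof (vnorm_sub_tri (ps e a n) (P He n (w (max I i))) (P He n (w i))).
    rewrite vnorm_sub_sym in HI. lra. }
  assert (Hexp : expands e a x).
  { intros eps Heps. destruct (Hbcv (eps/3) ltac:(lra)) as [I1 HI1].
    destruct (Hwx (eps/3) ltac:(lra)) as [I2 HI2]. set (I := max I1 I2).
    destruct (P_cv He (w I) (eps/3) ltac:(lra)) as [N HN]. exists N. intros n Hn.
    fold (ps e a n). pose proof (Hlim n I). pose proof (HN n Hn).
    specialize (HI1 I ltac:(lia)). unfold R_dist in HI1. rewrite Rminus_0_r in HI1.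
    pose proof (Rle_abs (beta I)). pose proof (HI2 I ltac:(lia)).
    pose proof (vnorm_sub_tri (ps e a n) (P He n (w I)) x).
    pose proof (vnorm_sub_tri (P He n (w I)) (w I) x). lra. }
  intros i n. replace (P He n x) with (ps e a n); [apply Hlim|].
  apply ps_ext. intros j _. symmetry. apply coef_unique, Hexp.
Qed.

Lemma halving_step c r i v : 0 < r ->
  (forall v, vnorm v < r -> proj_bounded_closure c v) -> vnorm v < r * (/2)^i ->
  exists v', proj_bounded (c * (/2)^i) (vsub v v') /\ vnorm v' < r * (/2)^(S i).
Proof.
  intros Hr Hball Hv. pose proof (half_pow_pos i) as Hl.
  assert (Hv0 : vnorm (vscal (/ (/2)^i) v) < r).
  { rewrite vnorm_scal, Rabs_pos_eq by (left; apply Rinv_0_lt_compat, Hl).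
    apply Rmult_lt_reg_l with ((/2)^i); auto. rewrite <- Rmult_assoc, Rinv_r by lra. lra. }
  pose proof (proj_bounded_closure_scal c ((/2)^i) _ Hl (Hball _ Hv0)) as Hcl.
  rewrite vscal_assoc, Rinv_r, vscal_1, Rmult_comm in Hcl by lra.
  destruct (Hcl (r * (/2)^(S i))) as [a [Ha1 Ha2]].
  { apply Rmult_lt_0_compat; auto. apply half_pow_pos. }
  exists (vsub v a). rewrite vsub_sub_self. auto.
Qed.

(* Under the same hypothesis every vector of B(0, r) has projections bounded
   by 2c: iterating the halving step writes it as a series of vectors with
   projections bounded by c (1/2)^i. *)
Lemma ball_bounded c r : 0 <= c -> 0 < r ->
  (forall v, vnorm v < r -> proj_bounded_closure c v) ->
  forall x, vnorm x < r -> proj_bounded (2 * c) x.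
Proof.
  intros Hc Hr Hball x Hx.
  destruct (seq_choice (fun i (v v' : X) => vnorm v < r * (/2)^i ->
      proj_bounded (c * (/2)^i) (vsub v v') /\ vnorm v' < r * (/2)^(S i)) x) as [f [Hf0 Hf]].
  { intros i v. destruct (Rlt_le_dec (vnorm v) (r * (/2)^i)) as [Hv|Hv]; [|exists v; lra].
    destruct (halving_step c r i v Hr Hball Hv) as [v' Hv']. exists v'. auto. }
  assert (Hrem : forall i, vnorm (f i) < r * (/2)^i).
  { induction i; [rewrite Hf0; simpl; lra|]. apply Hf; auto. }
  set (w := fun i => vsub x (f i)).
  assert (Hwd : forall i j n, (i <= j)%nat ->
      vnorm (vsub (P He n (w j)) (P He n (w i))) <= 2 * c * (/2)^i - 2 * c * (/2)^j).
  { intros i j n Hij. induction Hij as [|m Hij IH].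
    - rewrite vsub_diag, vnorm_0. lra.
    - rewrite (vsub_trans _ (P He n (w m))). eapply Rle_trans. apply vnorm_triangle.
      rewrite <- P_sub. unfold w at 1 2. rewrite vsub_sub_sub.
      destruct (Hf m (Hrem m)) as [H1 _]. specialize (H1 n).
      rewrite half_pow_S. lra. }
  intro n. replace (P He n x) with (vsub (P He n x) (P He n (w 0%nat))).
  - eapply Rle_trans; [apply (P_limit w x (fun i => 2 * c * (/2)^i)) with (i := 0%nat)|simpl; lra].
    + apply half_pow_cv.
    + intros i j m Hij. pose proof (Hwd i j m Hij). pose proof (half_pow_pos j). nra.
    + intros eps Heps. destruct (half_pow_small (eps / r)) as [N HN].
      { apply Rdiv_lt_0_compat; lra. }
      exists N. intros i Hi. unfold w. rewrite vnorm_sub_sym, vsub_sub_self.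
      pose proof (Hrem i). pose proof (half_pow_le N i Hi).
      apply Rmult_lt_compat_l with (r := r) in HN; auto.
      replace (r * (eps / r)) with eps in HN by (field; lra). nra.
  - unfold w. rewrite Hf0, vsub_diag, P_zero, vsub_0r. reflexivity.
Qed.

Lemma P_bounded : exists C, 0 <= C /\ forall u n, vnorm (P He n u) <= C * vnorm u.
Proof.
  destruct ball_approx as [c [r [Hc [Hr Hball]]]].
  exists (4 * c / r). split; [apply Rmult_le_pos; [lra|left; apply Rinv_0_lt_compat; auto]|].
  intros u n. destruct (Req_dec (vnorm u) 0) as [Hu|Hu].
  - apply vnorm_eq0 in Hu. subst u. rewrite P_zero, vnorm_0. lra.
  - pose proof (vnorm_ge0 u). set (lam := r / (2 * vnorm u)).
    assert (Hlam : 0 < lam) by (unfold lam; apply Rdiv_lt_0_compat; lra).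
    assert (Hsmall : vnorm (vscal lam u) < r).
    { rewrite vnorm_scal, Rabs_pos_eq by lra. unfold lam. field_simplify; lra. }
    pose proof (ball_bounded c r Hc Hr Hball _ Hsmall n) as Hb.
    rewrite P_scal, vnorm_scal, Rabs_pos_eq in Hb by lra.
    apply Rmult_le_reg_l with lam; auto. unfold lam in *.
    replace (r / (2 * vnorm u) * (4 * c / r * vnorm u)) with (2 * c) by (field; lra). exact Hb.
Qed.

Lemma coef_bounded_linear j : bounded_linear (coef He j).
Proof.
  split; [|split]; [apply coef_add|apply coef_scal|].
  destruct P_bounded as [C [HC HP]]. pose proof (e_nonzero He j).
  exists (2 * C / vnorm (e j)). intro u. apply Rmult_le_reg_r with (vnorm (e j)); auto.
  rewrite coef_P_bound.
  replace (2 * C / vnorm (e j) * vnorm u * vnorm (e j)) with (C * vnorm u + C * vnorm u)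
    by (field; lra).
  eapply Rle_trans. apply vnorm_sub_le. pose proof (HP u (S j)). pose proof (HP u j). lra.
Qed.

End BasisConstant.

Lemma P_small_coefs {X : Banach} {e : nat -> X} (He : schauder_basis e) m delta :
  0 < delta -> exists d, 0 < d /\
    forall v, (forall j, (j < m)%nat -> Rabs (coef He j v) < d) -> vnorm (P He m v) < delta.
Proof.
  revert delta. induction m as [|m IH]; intros delta Hdelta.
  - exists 1. split; [lra|]. intros v _. unfold P, ps. simpl. rewrite vnorm_0. exact Hdelta.
  - destruct (IH (delta/2) ltac:(lra)) as [d1 [Hd1 H1]].
    pose proof (vnorm_ge0 (e m)) as Hem.
    set (d2 := delta / 2 / (vnorm (e m) + 1)).
    assert (Hd2 : 0 < d2) by (unfold d2; apply Rdiv_lt_0_compat; lra).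
    exists (Rmin d1 d2). split; [apply Rmin_glb_lt; auto|].
    intros v Hv. rewrite P_S. eapply Rle_lt_trans. apply vnorm_triangle.
    assert (A1 : vnorm (P He m v) < delta / 2).
    { apply H1. intros j Hj. eapply Rlt_le_trans; [apply Hv; lia|apply Rmin_l]. }
    assert (A2 : Rabs (coef He m v) < d2).
    { eapply Rlt_le_trans; [apply Hv; lia|apply Rmin_r]. }
    rewrite vnorm_scal. pose proof (Rabs_pos (coef He m v)).
    assert (d2 * (vnorm (e m) + 1) = delta / 2) by (unfold d2; field; lra).
    nra.
Qed.

(** * The weak topology *)

Section WeakTopology.
Context {X : Banach}.

Lemma bl_sub (f : X -> R) (u v : X) : bounded_linear f -> f (vsub u v) = f u - f v.
Proof.
  intros [Ha [Hs _]]. unfold vsub. rewrite Ha, vopp_scal, Hs. ring.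
Qed.

Lemma bl_list_bound (fs : list (X -> R)) : Forall bounded_linear fs ->
  exists C, 0 <= C /\ forall f, In f fs -> forall u, Rabs (f u) <= C * vnorm u.
Proof.
  induction 1 as [|f fs [_ [_ [C' HC']]] _ [C [HC1 HC2]]]; [exists 0; split; [lra|intros f []]|].
  exists (Rmax C C'). split; [eapply Rle_trans; [apply HC1|apply Rmax_l]|].
  intros g [<-|Hg] u; pose proof (vnorm_ge0 u).
  - eapply Rle_trans; [apply HC'|]. apply Rmult_le_compat_r; [lra|apply Rmax_r].
  - eapply Rle_trans; [apply HC2; auto|]. apply Rmult_le_compat_r; [lra|apply Rmax_l].
Qed.

Lemma weak_open_ext (U V : X -> Prop) : weak_open U -> (forall w, U w <-> V w) -> weak_open V.
Proof.
  intros HU Hiff z Hz. apply Hiff in Hz. destruct (HU z Hz) as [fs [Hfs [d [Hd H]]]].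
  exists fs. split; auto. exists d. split; auto. intros w Hw. apply Hiff. auto.
Qed.

Lemma weak_open_true : weak_open (fun _ : X => True).
Proof. intros z _. exists []. split; [constructor|]. exists 1. split; [lra|auto]. Qed.

Lemma weak_open_and (U V : X -> Prop) : weak_open U -> weak_open V ->
  weak_open (fun w => U w /\ V w).
Proof.
  intros HU HV z [Hz1 Hz2]. destruct (HU z Hz1) as [fs1 [Hf1 [d1 [Hd1 H1]]]].
  destruct (HV z Hz2) as [fs2 [Hf2 [d2 [Hd2 H2]]]].
  exists (fs1 ++ fs2). split; [apply Forall_app; auto|].
  exists (Rmin d1 d2). split; [apply Rmin_glb_lt; auto|].
  intros w Hw. split.
  - apply H1. intros f Hf. eapply Rlt_le_trans; [apply Hw, in_or_app; auto|apply Rmin_l].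
  - apply H2. intros f Hf. eapply Rlt_le_trans; [apply Hw, in_or_app; auto|apply Rmin_r].
Qed.

Lemma weak_open_slab (f : X -> R) (r d : R) : bounded_linear f ->
  weak_open (fun w => Rabs (f w - r) < d).
Proof.
  intros Hf z Hz. exists [f]. split; [constructor; auto|].
  exists (d - Rabs (f z - r)). split; [lra|].
  intros w Hw. specialize (Hw f (or_introl eq_refl)).
  replace (f w - r) with ((f w - f z) + (f z - r)) by ring.
  eapply Rle_lt_trans; [apply Rabs_triang|lra].
Qed.

Lemma weak_open_list (fs : list (X -> R)) (z : X) (d : R) : Forall bounded_linear fs ->
  weak_open (fun w => forall f, In f fs -> Rabs (f w - f z) < d).
Proof.
  induction 1 as [|g fs Hg _ IH].
  - eapply weak_open_ext; [apply weak_open_true|]. intro w; split; auto. intros _ f [].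
  - eapply weak_open_ext; [apply weak_open_and; [apply (weak_open_slab g (g z) d Hg)|apply IH]|].
    intro w; split.
    + intros [H1 H2] f [<-|Hf]; auto.
    + intro H1. split; [apply H1; left; auto|]. intros f Hf. apply H1; right; auto.
Qed.

End WeakTopology.

Lemma weak_open_coefs {X : Banach} {e : nat -> X} (He : schauder_basis e) (m : nat) (z : X) d :
  weak_open (fun w => forall j, (j < m)%nat -> Rabs (coef He j w - coef He j z) < d).
Proof.
  eapply weak_open_ext; [apply (weak_open_list (map (coef He) (seq 0 m)) z d)|].
  { apply Forall_forall. intros f Hf. apply in_map_iff in Hf. destruct Hf as [j [<- _]].
    apply coef_bounded_linear. }
  intro w. split.
  - intros H j Hj. apply H, in_map, in_seq. lia.
  - intros H f Hf. apply in_map_iff in Hf. destruct Hf as [j [<- Hj]]. apply in_seq in Hj.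
    apply H. lia.
Qed.

(** * Increasing enumerations and finite increasing lists *)

Section Enumerations.
Variable L : nat -> nat.
Hypothesis HL : infinite_enum L.

Lemma enum_mono i j : (i < j)%nat -> (L i < L j)%nat.
Proof. induction 1; [apply HL|]. specialize (HL m). lia. Qed.

Lemma enum_ge j : (j <= L j)%nat.
Proof. induction j; [lia|]. specialize (HL j). lia. Qed.

Lemma enum_lt_inv i j : (L i < L j)%nat -> (i < j)%nat.
Proof.
  intro H. destruct (Nat.lt_ge_cases i j) as [|Hji]; auto.
  destruct (Nat.eq_dec i j) as [->|]; [lia|]. pose proof (enum_mono j i ltac:(lia)). lia.
Qed.

Lemma enum_le_inv i j : (L i <= L j)%nat -> (i <= j)%nat.
Proof.
  intro H. destruct (Nat.le_gt_cases i j) as [|Hji]; auto. pose proof (enum_mono j i Hji). lia.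
Qed.

Lemma enum_below a i : memb L a -> (a < L i)%nat -> exists i', i = S i' /\ (a <= L i')%nat.
Proof.
  intros [j <-] Hj. apply enum_lt_inv in Hj. destruct i as [|i']; [lia|]. exists i'.
  split; auto. destruct (Nat.eq_dec j i') as [->|]; [lia|]. pose proof (enum_mono j i'). lia.
Qed.

Definition position (a : nat) : nat := epsilon (inhabits 0%nat) (fun i => L i = a).

Lemma position_spec a : memb L a -> L (position a) = a.
Proof. intro Ha. exact (epsilon_spec (inhabits 0%nat) (fun i => L i = a) Ha). Qed.

End Enumerations.

Open Scope nat_scope.

Lemma incr_nth_lt (l : list nat) i j : Defs.increasing l -> i < j -> j < length l ->
  nth i l 0 < nth j l 0.
Proof.
  intros H Hij Hj. induction Hij; [apply H; auto|].
  eapply Nat.lt_trans; [apply IHHij; lia|apply H; auto].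
Qed.

Lemma incr_nth_le (l : list nat) i j : Defs.increasing l -> i <= j -> j < length l ->
  nth i l 0 <= nth j l 0.
Proof.
  intros H Hij Hj. destruct (Nat.eq_dec i j) as [->|]; [lia|].
  pose proof (incr_nth_lt l i j H). lia.
Qed.

Lemma incr_cons h t : Defs.increasing (h :: t) -> Defs.increasing t /\ forall a, In a t -> h < a.
Proof.
  intro H. split.
  - intros i Hi. apply (H (S i)). simpl. lia.
  - intros a Ha. apply (In_nth t a 0) in Ha. destruct Ha as [n [Hn <-]].
    apply (incr_nth_lt (h :: t) 0 (S n) H); simpl; lia.
Qed.

Lemma incr_firstn l j : Defs.increasing l -> Defs.increasing (firstn j l).
Proof.
  intros H i Hi. rewrite length_firstn in Hi. rewrite !nth_firstn.
  destruct (Nat.ltb_spec i j); [|lia]. destruct (Nat.ltb_spec (S i) j); [|lia]. apply H. lia.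
Qed.

Lemma in_firstn_in {A : Type} (a : A) j l : In a (firstn j l) -> In a l.
Proof. intro H. rewrite <- (firstn_skipn j l). apply in_or_app; auto. Qed.

Lemma incr_app_last u a : Defs.increasing (u ++ [a]) -> forall x, In x u -> x < a.
Proof.
  intros H x Hx. apply (In_nth u x 0) in Hx. destruct Hx as [n [Hn <-]].
  rewrite <- (app_nth1 u [a] 0 Hn). rewrite <- (nth_middle u [] a 0) at 2.
  apply incr_nth_lt; auto. rewrite length_app; simpl; lia.
Qed.

Lemma last_in (t : list nat) : t <> [] -> In (last t 0) t.
Proof.
  intro Ht. rewrite (app_removelast_last 0 Ht) at 2. apply in_or_app. right; left; auto.
Qed.

Lemma incr_le_last l : Defs.increasing l -> forall x, In x l -> x <= last l 0.
Proof.
  intros H x Hx. assert (Hne : l <> []) by (intro; subst; inversion Hx).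
  pose proof (app_removelast_last 0 Hne) as E. rewrite E in Hx, H. apply in_app_or in Hx.
  destruct Hx as [Hx|[<-|[]]]; [|lia]. pose proof (incr_app_last _ _ H x Hx). lia.
Qed.

Lemma incr_hd_le l : Defs.increasing l -> forall x, In x l -> hd 0 l <= x.
Proof.
  intros H x Hx. destruct l as [|h t]; [inversion Hx|]. simpl.
  destruct Hx as [<-|Hx]; [lia|]. apply incr_cons in H. pose proof (proj2 H x Hx). lia.
Qed.

Lemma firstn_ne (s : list nat) j : 1 <= j -> 1 <= length s -> firstn j s <> [].
Proof. intros H1 H2 Hc. destruct j; [lia|]. destruct s; simpl in *; [lia|discriminate]. Qed.

Lemma last_firstn (s : list nat) j : 1 <= j -> j <= length s ->
  last (firstn j s) 0 = nth (j - 1) s 0.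
Proof.
  intros H1 H2. pose proof (app_removelast_last 0 (firstn_ne s j H1 ltac:(lia))) as E.
  assert (Hl : length (firstn j s) = j) by (apply firstn_length_le; auto).
  assert (Hr : length (removelast (firstn j s)) = j - 1).
  { rewrite E, length_app in Hl. simpl in Hl. lia. }
  transitivity (nth (j - 1) (firstn j s) 0).
  - rewrite E at 2. rewrite <- Hr, nth_middle. reflexivity.
  - rewrite nth_firstn. destruct (Nat.ltb_spec (j - 1) j); auto; lia.
Qed.

Lemma last_firstn_app (t w : list nat) j : length t < j -> j <= length t + length w ->
  In (last (firstn j (t ++ w)) 0) w.
Proof.
  intros H1 H2. rewrite last_firstn by (try rewrite length_app; lia).
  rewrite app_nth2 by lia. apply nth_In. lia.
Qed.

Lemma subsets_le_firstn L k t j : in_subsets_le L k t -> in_subsets_le L k (firstn j t).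
Proof.
  intros [Hl [Hinc Hmem]]. split; [|split].
  - rewrite length_firstn. lia.
  - apply incr_firstn; auto.
  - intros a Ha. apply Hmem. eapply in_firstn_in; eauto.
Qed.

Lemma subsets_le_removelast_app M k u l : in_subsets_le M k (u ++ [l]) -> in_subsets_le M k u.
Proof.
  intro H. replace u with (firstn (length u) (u ++ [l])).
  - apply subsets_le_firstn, H.
  - rewrite firstn_app, Nat.sub_diag, firstn_all. simpl. apply app_nil_r.
Qed.

Lemma subsets_le_mono (L M : nat -> nat) k t :
  (forall a, memb L a -> memb M a) -> in_subsets_le L k t -> in_subsets_le M k t.
Proof. intros HLM [H1 [H2 H3]]. split; [|split]; auto. Qed.

Lemma subsets_eq_mono (L M : nat -> nat) k t :
  (forall a, memb L a -> memb M a) -> in_subsets_eq L k t -> in_subsets_eq M k t.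
Proof. intros HLM [H1 [H2 H3]]. split; [|split]; auto. Qed.

Lemma subsets_eq_le L k s : in_subsets_eq L k s -> in_subsets_le L k s.
Proof. intros [H1 H2]. split; auto. lia. Qed.

Lemma split_agree (t t' : list nat) (N : nat) : Defs.increasing t -> Defs.increasing t' ->
  (forall a, In a t -> a < N) -> agree_below N t t' ->
  t' = t ++ skipn (length t) t' /\ forall a, In a (skipn (length t) t') -> N <= a.
Proof.
  revert t'. induction t as [|h t IH]; intros t' Ht Ht' HN Hag.
  - simpl. split; auto. intros a Ha. destruct (Nat.lt_ge_cases a N) as [Hlt|]; auto.
    apply Hag in Hlt. apply Hlt in Ha. inversion Ha.
  - apply incr_cons in Ht. destruct Ht as [Ht Hth].
    assert (HhN : h < N) by (apply HN; left; auto).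
    assert (Hin : In h t') by (apply (Hag h HhN); left; auto).
    destruct t' as [|h' t'']; [inversion Hin|].
    apply incr_cons in Ht'. destruct Ht' as [Ht'' Hth'].
    assert (Hhh : h' = h).
    { destruct Hin as [|Hin]; auto. destruct (Nat.lt_ge_cases h' h).
      - assert (Hh' : In h' (h :: t)) by (apply (Hag h' ltac:(lia)); left; auto).
        destruct Hh' as [|Hh']; [lia|]. specialize (Hth h' Hh'). lia.
      - specialize (Hth' h Hin). lia. }
    subst h'.
    assert (Hag' : agree_below N t t'').
    { intros n Hn. split; intro Hnt.
      - assert (Hn' : In n (h :: t'')) by (apply (Hag n Hn); right; auto).
        destruct Hn' as [<-|]; auto. specialize (Hth h Hnt). lia.
      - assert (Hn' : In n (h :: t)) by (apply (Hag n Hn); right; auto).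
        destruct Hn' as [<-|]; auto. specialize (Hth' h Hnt). lia. }
    destruct (IH t'' Ht Ht'' (fun a Ha => HN a (or_intror Ha)) Hag') as [E1 E2].
    simpl. split; [rewrite E1 at 1; reflexivity|exact E2].
Qed.

Lemma bounded_max (B : nat) (Q : nat -> nat -> Prop) :
  (forall h N N', N <= N' -> Q h N -> Q h N') ->
  (forall h, h < B -> exists N, Q h N) -> exists N, forall h, h < B -> Q h N.
Proof.
  intros Hmono H. induction B as [|B IH]; [exists 0; intros; lia|].
  destruct IH as [N1 HN1]; [intros; apply H; lia|]. destruct (H B ltac:(lia)) as [N2 HN2].
  exists (max N1 N2). intros h Hh. destruct (Nat.eq_dec h B) as [->|].
  - eapply Hmono; [|eauto]. lia.
  - eapply Hmono; [|apply HN1; lia]. lia.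
Qed.

Lemma unif_lists (K B : nat) (Q : list nat -> nat -> Prop) :
  (forall t, length t <= K -> (forall a, In a t -> a < B) ->
     exists N, forall n, N <= n -> Q t n) ->
  exists N, forall t, length t <= K -> (forall a, In a t -> a < B) ->
    forall n, N <= n -> Q t n.
Proof.
  revert Q. induction K as [|K IH]; intros Q H.
  - destruct (H [] ltac:(simpl; lia) ltac:(intros a [])) as [N HN]. exists N.
    intros t Ht _ n Hn. destruct t; [auto|simpl in Ht; lia].
  - destruct (H [] ltac:(simpl; lia) ltac:(intros a [])) as [N0 HN0].
    destruct (bounded_max B (fun h N => forall t, length t <= K -> (forall a, In a t -> a < B) ->
        forall n, N <= n -> Q (h :: t) n)) as [N1 HN1].
    + intros h N N' HNN' HR t Ht Hb n Hn. apply HR; auto; lia.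
    + intros h Hh. apply (IH (fun t n => Q (h :: t) n)). intros t Ht Hb.
      apply H; [simpl; lia|]. intros a [<-|Ha]; auto.
    + exists (max N0 N1). intros t Ht Hb n Hn. destruct t as [|h t].
      * apply HN0; lia.
      * apply HN1; [apply Hb; left; auto|simpl in Ht; lia|intros a Ha; apply Hb; right; auto|lia].
Qed.

Close Scope nat_scope.

Lemma agree_below_snoc N u l : (N <= l)%nat -> agree_below N u (u ++ [l]).
Proof.
  intros Hl q Hq. split; intro H; [apply in_or_app; auto|].
  apply in_app_or in H. destruct H as [|[<-|[]]]; auto. lia.
Qed.

(** * Choosing L and the blocks of coordinates *)

Lemma exists_inv_small (A d : R) : 0 < d -> exists I : nat, A * / (INR I + 1) < d.
Proof.
  intro Hd. destruct (INR_unbounded (A / d)) as [I HI]. exists I.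
  pose proof (pos_INR I). apply Rmult_lt_reg_r with (INR I + 1); [lra|].
  rewrite Rmult_assoc, Rinv_l, Rmult_1_r by lra.
  apply Rmult_lt_compat_r with (r := d) in HI; auto.
  replace (A / d * d) with A in HI by (field; lra). nra.
Qed.

Lemma control_sequence (eps : nat -> R) (c : R) : (forall n, 0 < eps n) -> 0 < c ->
  exists tau : nat -> R, (forall i, 0 < tau i) /\
    (forall i n, (n <= i)%nat -> tau i <= eps n / c) /\ (forall i, tau i <= / (INR i + 1)).
Proof.
  intros Heps Hc.
  set (epsmin := fix f (i : nat) : R :=
         match i with O => eps 0%nat | S i => Rmin (f i) (eps (S i)) end).
  assert (Hpos : forall i, 0 < epsmin i) by (induction i; simpl; [|apply Rmin_glb_lt]; auto).
  assert (Hle : forall i n, (n <= i)%nat -> epsmin i <= eps n).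
  { induction i; intros n Hn.
    - replace n with 0%nat by lia. simpl. lra.
    - destruct (Nat.eq_dec n (S i)) as [->|]; simpl; [apply Rmin_r|].
      eapply Rle_trans; [apply Rmin_l|apply IHi; lia]. }
  exists (fun i => Rmin (epsmin i / c) (/ (INR i + 1))).
  assert (Hinv : forall i, 0 < / (INR i + 1))
    by (intro i; apply Rinv_0_lt_compat; pose proof (pos_INR i); lra).
  split; [|split].
  - intro i. apply Rmin_glb_lt; auto. apply Rdiv_lt_0_compat; auto.
  - intros i n Hn. eapply Rle_trans; [apply Rmin_l|].
    apply Rmult_le_compat_r; [left; apply Rinv_0_lt_compat; auto|auto].
  - intro i. apply Rmin_r.
Qed.

Section Construction.
Context {X : Banach} {e : nat -> X} (He : schauder_basis e).
Variables (k : nat) (M : nat -> nat) (phi : list nat -> X).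
Hypothesis HM : infinite_enum M.
Hypothesis Hcont : weak_continuous_on M k phi.

Definition increment (t : list nat) : X :=
  match t with [] => phi [] | _ => vsub (phi t) (phi (removelast t)) end.

Lemma telescope (t : list nat) :
  vsum (map (fun j => increment (firstn j t)) (seq 0 (S (length t)))) = phi t.
Proof.
  induction t as [|a t IH] using rev_ind; [simpl; apply vadd_0r|].
  rewrite length_app. simpl (length [a]).
  replace (S (length t + 1)) with (S (S (length t))) by lia.
  rewrite vsum_seq_S.
  rewrite (vsum_map_ext _ (fun j => increment (firstn j t))).
  - rewrite IH. simpl (0 + S (length t))%nat.
    rewrite firstn_all2 by (rewrite length_app; simpl; lia).
    unfold increment. destruct (t ++ [a]) eqn:E; [destruct t; discriminate|].
    rewrite <- E, removelast_last. apply vadd_sub.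
  - intros j Hj. apply in_seq in Hj. rewrite firstn_app.
    replace (j - length t)%nat with 0%nat by lia. simpl. rewrite app_nil_r. reflexivity.
Qed.

(* By weak continuity of phi at the finitely many u with entries < b, the
   first m coordinates of phi (u ++ [l]) - phi u are small for large l. *)
Lemma low_coefs_small delta b m : 0 < delta -> exists N, forall u l,
  (length u <= k)%nat -> (forall a, In a u -> (a < b)%nat) -> (N <= l)%nat ->
  in_subsets_le M k (u ++ [l]) -> vnorm (P He m (vsub (phi (u ++ [l])) (phi u))) < delta.
Proof.
  intro Hdelta. destruct (P_small_coefs He m delta Hdelta) as [d [Hd Hsmall]].
  destruct (unif_lists k b (fun u n => in_subsets_le M k u -> forall l, (n <= l)%nat ->
      in_subsets_le M k (u ++ [l]) -> vnorm (P He m (vsub (phi (u ++ [l])) (phi u))) < delta))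
    as [N HN].
  { intros u _ _. destruct (classic (in_subsets_le M k u)) as [Hu|Hu];
      [|exists 0%nat; intros; contradiction].
    destruct (Hcont u Hu _ (weak_open_coefs He m (phi u) d)) as [N HN].
    { intros j _. unfold Rminus. rewrite Rplus_opp_r, Rabs_R0. auto. }
    exists N. intros n Hn _ l Hl Hul. apply Hsmall. intros j Hj. rewrite coef_sub.
    apply HN; auto. apply agree_below_snoc. lia. }
  exists N. intros u l Hu Hb Hl Hul.
  apply (HN u Hu Hb N (le_n N)); auto. apply subsets_le_removelast_app with l; auto.
Qed.

Lemma high_coefs_small delta B : 0 < delta -> exists N, forall n t, (N <= n)%nat ->
  (length t <= k)%nat -> (forall a, In a t -> (a < B)%nat) ->
  vnorm (vsub (increment t) (P He n (increment t))) < delta.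
Proof.
  intro Hdelta.
  destruct (unif_lists k B (fun t n => vnorm (vsub (increment t) (P He n (increment t))) < delta))
    as [N HN].
  { intros t _ _. destruct (P_cv He (increment t) delta Hdelta) as [N HN].
    exists N. intros n Hn. rewrite vnorm_sub_sym. auto. }
  exists N. intros n t Hn Ht Hb. apply HN; auto.
Qed.

Definition good_stage (delta : R) (l0 q0 l q : nat) : Prop :=
  (l0 < l)%nat /\ memb M l /\ (q0 <= q)%nat /\
  (forall u, (length u <= k)%nat -> (forall a, In a u -> (a <= l0)%nat) ->
     in_subsets_le M k (u ++ [l]) -> vnorm (P He q0 (vsub (phi (u ++ [l])) (phi u))) < delta) /\
  (forall t, (length t <= k)%nat -> (forall a, In a t -> (a <= l)%nat) ->
     vnorm (vsub (increment t) (P He q (increment t))) < delta).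

Lemma block_stage delta l0 q0 : 0 < delta -> exists l q, good_stage delta l0 q0 l q.
Proof.
  intro Hdelta.
  destruct (low_coefs_small delta (S l0) q0 Hdelta) as [N1 HN1].
  set (l := M (max N1 (S l0))). pose proof (enum_ge M HM (max N1 (S l0))) as Hl.
  fold l in Hl. destruct (high_coefs_small delta (S l) Hdelta) as [N2 HN2].
  exists l, (max q0 N2). split; [|split; [|split; [|split]]].
  - lia.
  - exists (max N1 (S l0)). reflexivity.
  - lia.
  - intros u Hu Hb Hul. apply HN1; auto; [intros a Ha; specialize (Hb a Ha)|]; lia.
  - intros t Ht Hb. apply HN2; auto; [lia|intros a Ha; specialize (Hb a Ha); lia].
Qed.

Definition blocks_adapted (tau : nat -> R) (L p : nat -> nat) : Prop :=
  forall t i, in_subsets_le L k t -> t <> [] -> last t 0%nat = L i ->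
    vnorm (P He (p i) (increment t)) < tau i / 2 /\
    vnorm (vsub (increment t) (P He (p (S i)) (increment t))) < tau i / 2.

Lemma good_stage_adapted delta l0 q0 l q (L : nat -> nat) :
  (forall a, memb L a -> memb M a) -> good_stage delta l0 q0 l q ->
  (forall a, memb L a -> (a < l)%nat -> (a <= l0)%nat) ->
  forall t, in_subsets_le L k t -> t <> [] -> last t 0%nat = l ->
    vnorm (P He q0 (increment t)) < delta /\
    vnorm (vsub (increment t) (P He q (increment t))) < delta.
Proof.
  intros HLM [_ [_ [_ [Hlow Hhigh]]]] Hbelow t Ht Hne Hlast.
  pose proof Ht as [Hlen [Hinc Hmem]].
  assert (Et : t = removelast t ++ [l]) by (rewrite <- Hlast; apply app_removelast_last, Hne).
  split.
  - replace (increment t) with (vsub (phi (removelast t ++ [l])) (phi (removelast t))).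
    + apply Hlow.
      * rewrite Et, length_app in Hlen. simpl in Hlen. lia.
      * intros a Ha. rewrite Et in Hinc, Hmem. apply Hbelow.
        -- apply Hmem, in_or_app. auto.
        -- exact (incr_app_last _ _ Hinc a Ha).
      * rewrite <- Et. apply (subsets_le_mono L); auto.
    + rewrite <- Et. unfold increment. destruct t; [congruence|reflexivity].
  - apply Hhigh; [exact Hlen|]. intros a Ha. rewrite <- Hlast. apply incr_le_last; auto.
Qed.

Lemma block_construction (tau : nat -> R) : (forall i, 0 < tau i) ->
  exists L p : nat -> nat, infinite_enum L /\ (forall n, memb M (L n)) /\
    (forall i, (p i <= p (S i))%nat) /\ blocks_adapted tau L p.
Proof.
  intro Htau.
  destruct (seq_choice (fun i (lq lq' : nat * nat) =>
      good_stage (tau i / 2) (fst lq) (snd lq) (fst lq') (snd lq')) (0%nat, 0%nat))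
    as [f [Hf0 Hf]].
  { intros i [l0 q0]. destruct (block_stage (tau i / 2) l0 q0) as [l [q H]].
    - pose proof (Htau i). lra.
    - exists (l, q). exact H. }
  set (L := fun i => fst (f (S i))). set (p := fun i => snd (f i)).
  assert (HL : infinite_enum L) by (intro i; apply (Hf (S i))).
  assert (HLM : forall n, memb M (L n)) by (intro n; apply (Hf n)).
  exists L, p. split; [exact HL|]. split; [exact HLM|]. split; [intro i; apply (Hf i)|].
  intros t i. apply (good_stage_adapted _ (fst (f i))); [intros a [n <-]; apply HLM|apply Hf|].
  intros a Ha Hai. destruct (enum_below L HL a i Ha Hai) as [i' [-> Hai']]. exact Hai'.
Qed.

(** * The canonical tree decomposition *)

Section Decomposition.
Variables (tau : nat -> R) (L p : nat -> nat).
Hypothesis HL : infinite_enum L.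
Hypothesis HLM : forall n, memb M (L n).
Hypothesis Hp : forall i, (p i <= p (S i))%nat.
Hypothesis Hadapted : blocks_adapted tau L p.

Lemma L_in_M a : memb L a -> memb M a.
Proof. intros [n <-]. apply HLM. Qed.

Lemma p_mono i j : (i <= j)%nat -> (p i <= p j)%nat.
Proof. induction 1; [lia|]. specialize (Hp m). lia. Qed.

Definition blk (t : list nat) : nat := position L (last t 0%nat).

Definition ytree (t : list nat) : X :=
  match t with
  | [] => phi []
  | _ => vsub (P He (p (S (blk t))) (increment t)) (P He (p (blk t)) (increment t))
  end.

Definition err (t : list nat) : X := vsub (increment t) (ytree t).

Definition err_sum (t : list nat) : X :=
  vsum (map (fun j => err (firstn j t)) (seq 0 (S (length t)))).

Definition xtilde (t : list nat) : X :=
  vsum (map (fun j => ytree (restr t j)) (seq 0 (S (length t)))).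

Lemma xtilde_eq t : xtilde t = vsub (phi t) (err_sum t).
Proof.
  unfold xtilde, err_sum, restr. rewrite <- (telescope t) at 1. rewrite <- vsum_map_sub.
  apply vsum_map_ext. intros j _. unfold err. symmetry. apply vsub_sub_self.
Qed.

Lemma xtilde_nil : xtilde [] = phi [].
Proof. unfold xtilde. simpl. apply vadd_0r. Qed.

Lemma ytree_supp t n : t <> [] -> in_supp e (ytree t) n -> (p (blk t) <= n < p (S (blk t)))%nat.
Proof.
  intros Ht Hn. destruct t as [|a t]; [congruence|].
  apply (Pdiff_supp He (increment (a :: t))); auto.
Qed.

Lemma ytree_supp_lt t1 t2 : t1 <> [] -> t2 <> [] -> memb L (last t1 0%nat) -> memb L (last t2 0%nat) ->
  (last t1 0 < last t2 0)%nat -> supp_lt e (ytree t1) (ytree t2).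
Proof.
  intros H1 H2 H3 H4 H5 m n Hm Hn. apply ytree_supp in Hm; auto. apply ytree_supp in Hn; auto.
  rewrite <- (position_spec L _ H3), <- (position_spec L _ H4) in H5.
  apply (enum_lt_inv L HL) in H5. pose proof (p_mono _ _ H5). unfold blk in *. lia.
Qed.

Lemma err_bound t : in_subsets_le L k t -> t <> [] -> vnorm (err t) < tau (blk t).
Proof.
  intros Ht Hne. pose proof Ht as [_ [_ Hmem]].
  destruct (Hadapted t (blk t) Ht Hne) as [H1 H2].
  { unfold blk. rewrite position_spec; auto. apply Hmem, last_in, Hne. }
  replace (err t) with (vadd (vsub (increment t) (P He (p (S (blk t))) (increment t)))
                              (P He (p (blk t)) (increment t))).
  - eapply Rle_lt_trans; [apply vnorm_triangle|lra].
  - unfold err, ytree. destruct t; [congruence|]. unfold vsub.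
    rewrite vopp_add, vopp_opp, vadd_assoc. reflexivity.
Qed.

Lemma restr_last s j : in_subsets_eq L k s -> (1 <= j <= k)%nat ->
  restr s j <> [] /\ last (restr s j) 0%nat = nth (j - 1) s 0%nat /\ memb L (nth (j - 1) s 0%nat).
Proof.
  intros [Hl [Hinc Hmem]] Hj. unfold restr. split; [|split].
  - apply firstn_ne; lia.
  - apply last_firstn; lia.
  - apply Hmem, nth_In. lia.
Qed.

(* The truncated increments form a canonical tree decomposition of the new
   sequence: conditions (iii)-(v) compare last entries of restrictions. *)
Lemma tree_decomposition : canonical_tree_decomposition e L k xtilde ytree.
Proof.
  split; [|split; [|split; [|split]]].
  - intros s [Hl _]. unfold xtilde. rewrite Hl. reflexivity.
  - intros t Ht Hne. exists (p (S (blk t))). intros n Hn. apply ytree_supp in Hn; auto. lia.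
  - intros s j1 j2 Hs H1 H12 H2.
    destruct (restr_last s j1 Hs ltac:(lia)) as [A1 [A2 A3]].
    destruct (restr_last s j2 Hs ltac:(lia)) as [B1 [B2 B3]].
    apply ytree_supp_lt; auto; try congruence. rewrite A2, B2. destruct Hs as [Hl [Hinc _]].
    apply incr_nth_lt; auto; lia.
  - intros s1 s2 j1 j2 Hpl H1 H12 H2. pose proof Hpl as [Hs1 [Hs2 [Hp1 _]]].
    destruct (restr_last s1 j1 Hs1 ltac:(lia)) as [A1 [A2 A3]].
    destruct (restr_last s2 j2 Hs2 ltac:(lia)) as [B1 [B2 B3]].
    apply ytree_supp_lt; auto; try congruence. rewrite A2, B2. destruct Hs2 as [Hl [Hinc _]].
    specialize (Hp1 (j1 - 1)%nat ltac:(lia)).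
    pose proof (incr_nth_le s2 (j1 - 1) (j2 - 1) Hinc ltac:(lia) ltac:(lia)). lia.
  - intros s1 s2 j1 j2 Hpl H1 H12 H2. pose proof Hpl as [Hs1 [Hs2 [_ Hp2]]].
    destruct (restr_last s2 j1 Hs2 ltac:(lia)) as [A1 [A2 A3]].
    destruct (restr_last s1 j2 Hs1 ltac:(lia)) as [B1 [B2 B3]].
    apply ytree_supp_lt; auto; try congruence. rewrite A2, B2. destruct Hs1 as [Hl [Hinc _]].
    specialize (Hp2 (j1 - 1)%nat ltac:(lia)). replace (S (j1 - 1)) with j1 in Hp2 by lia.
    pose proof (incr_nth_le s1 j1 (j2 - 1) Hinc ltac:(lia) ltac:(lia)). lia.
Qed.

Lemma err_restr_bound t j c : in_subsets_le L k t -> (1 <= j <= length t)%nat ->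
  (forall i, L i = last (firstn j t) 0%nat -> tau i <= c) -> vnorm (err (firstn j t)) <= c.
Proof.
  intros Ht Hj Hc. pose proof Ht as [_ [_ Hmem]].
  assert (Hne : firstn j t <> []) by (apply firstn_ne; lia).
  left. eapply Rlt_le_trans; [apply err_bound; auto; apply subsets_le_firstn, Ht|].
  apply Hc. unfold blk. rewrite position_spec; [reflexivity|].
  apply Hmem, (in_firstn_in _ j), last_in, Hne.
Qed.

Lemma err_sum_small (eps : nat -> R) s n :
  (forall i n, (n <= i)%nat -> tau i <= eps n / (2 * INR (S k))) -> 0 < eps n ->
  in_subsets_eq L k s -> hd 0%nat s = L n -> vnorm (err_sum s) < eps n.
Proof.
  intros Htau Hn Hs Hhd. pose proof Hs as [Hl [Hinc Hmem]].
  assert (Hk : 0 < INR (S k)) by (apply lt_0_INR; lia).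
  eapply Rle_lt_trans.
  - apply (vsum_norm_bound _ _ (eps n / (2 * INR (S k)))). intros j Hj. apply in_seq in Hj.
    destruct (Nat.eq_dec j 0) as [->|Hj0].
    + change (firstn 0 s) with (@nil nat). unfold err, ytree, increment.
      rewrite vsub_diag, vnorm_0.
      left. apply Rdiv_lt_0_compat; lra.
    + apply err_restr_bound; [apply subsets_eq_le; auto|lia|]. intros i Hi. apply Htau.
      apply (enum_le_inv L HL). rewrite <- Hhd, Hi. apply incr_hd_le; auto. apply (in_firstn_in _ j), last_in, firstn_ne; lia.
  - rewrite length_seq. replace (INR (S (length s)) * (eps n / (2 * INR (S k)))) with (eps n / 2).
    + lra.
    + rewrite Hl. field. lra.
Qed.

Lemma err_sum_app t w : err_sum (t ++ w) = vadd (err_sum t)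
  (vsum (map (fun j => err (firstn j (t ++ w))) (seq (S (length t)) (length w)))).
Proof.
  unfold err_sum. rewrite length_app.
  replace (S (length t + length w)) with (S (length t) + length w)%nat by lia.
  rewrite seq_app, map_app, vsum_app. f_equal. apply vsum_map_ext. intros j Hj.
  apply in_seq in Hj. rewrite firstn_app. replace (j - length t)%nat with 0%nat by lia.
  simpl. rewrite app_nil_r. reflexivity.
Qed.

Lemma err_tail_bound t w I0 : (forall i, tau i <= / (INR i + 1)) ->
  in_subsets_le L k (t ++ w) -> (forall a, In a w -> (L I0 <= a)%nat) ->
  vnorm (vsum (map (fun j => err (firstn j (t ++ w))) (seq (S (length t)) (length w))))
    <= INR k * / (INR I0 + 1).
Proof.
  intros Htau Htw Hw. pose proof Htw as [Hl _]. rewrite length_app in Hl.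
  assert (HI0 : 0 < / (INR I0 + 1)) by (apply Rinv_0_lt_compat; pose proof (pos_INR I0); lra).
  eapply Rle_trans.
  - apply vsum_norm_bound with (c := / (INR I0 + 1)). intros j Hj. apply in_seq in Hj.
    apply err_restr_bound; auto; [rewrite length_app; lia|]. intros i Hi.
    eapply Rle_trans; [apply Htau|]. apply Rinv_le_contravar; [pose proof (pos_INR I0); lra|].
    apply Rplus_le_compat_r, le_INR, (enum_le_inv L HL). rewrite Hi.
    apply Hw, last_firstn_app; lia.
  - rewrite length_seq. apply Rmult_le_compat_r; [lra|]. apply le_INR. lia.
Qed.

(* The new sequence is again weakly continuous on [L]^{<=k}: near t the
   extra truncation errors are uniformly small in norm. *)
Lemma xtilde_continuous : (forall i, tau i <= / (INR i + 1)) -> weak_continuous_on L k xtilde.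
Proof.
  intros Htau t Ht U HU HUt.
  destruct (HU _ HUt) as [fs [Hfs [dl [Hdl HUd]]]].
  destruct (bl_list_bound fs Hfs) as [C [HC0 HC]].
  pose proof Ht as [_ [Hinc _]].
  destruct (Hcont t (subsets_le_mono L M k t L_in_M Ht) _ (weak_open_list fs (phi t) (dl/2) Hfs))
    as [N1 HN1].
  { intros f _. unfold Rminus. rewrite Rplus_opp_r, Rabs_R0. lra. }
  destruct (exists_inv_small (C * INR k) (dl/2) ltac:(lra)) as [I0 HI0].
  set (N := max N1 (max (S (list_max t)) (L I0))).
  exists N. intros t' Ht' Hag. pose proof Ht' as [_ [Hinc' _]].
  destruct (split_agree t t' N Hinc Hinc') as [Et Hw]; auto.
  { intros a Ha. pose proof (proj1 (list_max_le t (list_max t)) (le_n _)) as Hmax.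
    rewrite Forall_forall in Hmax. specialize (Hmax a Ha). lia. }
  set (w := skipn (length t) t') in *.
  assert (Htail := err_tail_bound t w I0 Htau ltac:(rewrite <- Et; exact Ht')
                     ltac:(intros a Ha; specialize (Hw a Ha); lia)).
  apply HUd. intros f Hf.
  assert (Hbl : bounded_linear f) by (rewrite Forall_forall in Hfs; auto).
  rewrite !xtilde_eq, Et, err_sum_app, <- Et, !(bl_sub f _ _ Hbl).
  destruct Hbl as [Hadd _]. rewrite Hadd.
  assert (H1 : Rabs (f (phi t') - f (phi t)) < dl / 2).
  { apply (HN1 t' (subsets_le_mono L M k t' L_in_M Ht')); auto.
    intros q Hq. apply Hag. lia. }
  assert (H2 : Rabs (f (vsum (map (fun j => err (firstn j t')) (seq (S (length t)) (length w)))))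
               < dl / 2).
  { eapply Rle_lt_trans; [apply HC; auto|]. rewrite <- Et in Htail.
    eapply Rle_lt_trans; [apply Rmult_le_compat_l; [exact HC0|exact Htail]|].
    rewrite <- Rmult_assoc. exact HI0. }
  match goal with |- Rabs ?a < _ => replace a with
      ((f (phi t') - f (phi t)) + - f (vsum (map (fun j => err (firstn j t')) (seq (S (length t)) (length w)))))
      by ring end.
  eapply Rle_lt_trans; [apply Rabs_triang|]. rewrite Rabs_Ropp. lra.
Qed.

End Decomposition.

End Construction.

Theorem mainTheorem5 (X : Banach) (e : nat -> X) (He : schauder_basis e)
  (k : nat) (Hk : (1 <= k)%nat) (x : list nat -> X)
  (eps : nat -> R) (Heps_pos : forall n, 0 < eps n) (Heps_null : Un_cv eps 0)
  (M : nat -> nat) (HM : infinite_enum M)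
  (phi : list nat -> X) (Hphi : subordinating_map M k x phi) :
  exists L : nat -> nat,
    infinite_enum L /\ (forall n, memb M (L n)) /\
    exists (xt : list nat -> X) (y : list nat -> X),
      canonical_tree_decomposition e L k xt y /\ y [] = phi [] /\
      (forall s n, in_subsets_eq L k s -> hd 0%nat s = L n ->
         vnorm (vsub (x s) (xt s)) < eps n) /\
      exists psi : list nat -> X, subordinating_map L k xt psi /\ psi [] = phi [].
Proof.
  destruct Hphi as [Hcont Hphix].
  assert (Hscale : 0 < 2 * INR (S k)) by (pose proof (lt_0_INR (S k) ltac:(lia)); lra).
  destruct (control_sequence eps (2 * INR (S k)) Heps_pos Hscale)
    as [tau [Htau_pos [Htau_eps Htau_inv]]].
  destruct (block_construction He k M phi HM Hcont tau Htau_pos)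
    as [L [p [HL [HLM [Hp Hadapted]]]]].
  exists L. split; [exact HL|]. split; [exact HLM|].
  exists (xtilde He phi L p), (ytree He phi L p).
  split; [apply tree_decomposition; auto|]. split; [reflexivity|]. split.
  - intros s n Hs Hhd.
    rewrite <- (Hphix s (subsets_eq_mono L M k s (L_in_M M L HLM) Hs)), xtilde_eq, vsub_sub_self.
    apply (err_sum_small He k phi tau L p HL Hadapted eps); auto.
  - exists (xtilde He phi L p). split; [split; [|reflexivity]|apply xtilde_nil].
    apply (xtilde_continuous He k M phi Hcont tau L p); auto.
Qed.
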